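(* Let $M$ and $M'$ be two stable matchings in an instance $I$ of SPA-S, and let $M^\land$ be the assignment defined from $M,M'$ in the context. If a lecturer $l_k$ is undersubscribed in $M^\land$, then $l_k$ is undersubscribed in both $M$ and $M'$.
   Context: An instance $I$ of SPA-S consists of a finite set $\mathcal{S}$ of students, a finite set $\mathcal{P}$ of projects and a finite set $\mathcal{L}$ of lecturers. Each student $s_i$ ranks a subset $A_i\subseteq\mathcal{P}$ (its acceptable projects) in strict order. Each project is offered by exactly one lecturer; lecturer $l_k$ offers a nonempty set $P_k\subseteq\mathcal{P}$, the $P_k$ partitioning $\mathcal{P}$. Each lecturer $l_k$ ranks in strict order the students who find at least one project of $P_k$ acceptable. Projects have capacities $c_j\in\mathbb{Z}^+$, lecturers have capacities $d_k\in\mathbb{Z}^+$ with $\max\{c_j:p_j\in P_k\}\le d_k\le\sum\{c_j:p_j\in P_k\}$. A pair $(s_i,p_j)$, $p_j$ offered by $l_k$, is acceptable if $p_j\in A_i$ and $s_i$ is on $l_k$'s list. A matching $M$ is a set of acceptable pairs with each student in at most one pair, $|M(p_j)|\le c_j$, $|M(l_k)|\le d_k$, where for an assignment $M$ (a set of acceptable pairs), $M(s_i)$, $M(p_j)$, $M(l_k)$ denote the project of $s_i$, the students assigned to $p_j$, and the students assigned to projects of $l_k$. Undersubscribed/full means fewer than/exactly capacity many assigned students. An acceptable pair $(s_i,p_j)\notin M$ ($p_j$ offered by $l_k$) blocks $M$ if ($s_i$ is unassigned or prefers $p_j$ to $M(s_i)$) and one of: (P1) $p_j$ and $l_k$ undersubscribed;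 (P2) $p_j$ undersubscribed, $l_k$ full, $s_i\in M(l_k)$; (P3) $p_j$ undersubscribed, $l_k$ full, $l_k$ prefers $s_i$ to the worst student of $M(l_k)$; (P4) $p_j$ full and $l_k$ prefers $s_i$ to the worst student of $M(p_j)$. $M$ is stable if it has no blocking pair. Given stable matchings $M,M'$, $M^\land$ is the assignment in which each student unassigned in both $M$ and $M'$ is unassigned, each student assigned to the same project in both is assigned to that project, and every other student is assigned to the better (in her preference) of her projects in $M$ and $M'$. *)

From mathcomp Require Import all_boot.
Set Implicit Arguments. Unset Strict Implicit. Unset Printing Implicit Defensive.

(* An SPA-S instance over finite types of students S, projects P, lecturers L.
   Strict preference lists are encoded by ranks (smaller rank = more preferred),
   injective on the relevant list. *)
Record SPAS (S P L : finType) := {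
  acc : S -> {set P};
  srank : S -> P -> nat;
  offer : P -> L;
  lrank : L -> S -> nat;
  pcap : P -> nat;
  lcap : L -> nat;
  srank_inj : forall s, {in acc s &, injective (srank s)};
  lrank_inj : forall l,
    {in [pred s | [exists p, (offer p == l) && (p \in acc s)]] &, injective (lrank l)};
  offer_nonempty : forall l, exists p, offer p = l;
  pcap_pos : forall p, 0 < pcap p;
  lcap_pos : forall l, 0 < lcap l;
  lcap_ge : forall p, pcap p <= lcap (offer p);
  lcap_le : forall l, lcap l <= \sum_(p | offer p == l) pcap p
}.

Section Defs.
Variables (S P L : finType) (I : SPAS S P L).

Definition on_list (l : L) (s : S) : bool :=
  [exists p, (offer I p == l) && (p \in acc I s)].

Definition acceptable (s : S) (p : P) : bool :=
  (p \in acc I s) && on_list (offer I p) s.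

Definition Mp (M : {set S * P}) (p : P) : {set S} := [set s | (s, p) \in M].
Definition Ml (M : {set S * P}) (l : L) : {set S} :=
  [set s | [exists p, ((s, p) \in M) && (offer I p == l)]].

Definition is_matching (M : {set S * P}) : Prop :=
  [/\ forall s p, (s, p) \in M -> acceptable s p,
      forall s p q, (s, p) \in M -> (s, q) \in M -> p = q,
      forall p, #|Mp M p| <= pcap I p
    & forall l, #|Ml M l| <= lcap I l].

Definition p_under (M : {set S * P}) (p : P) : bool := #|Mp M p| < pcap I p.
Definition p_full  (M : {set S * P}) (p : P) : bool := #|Mp M p| == pcap I p.
Definition l_under (M : {set S * P}) (l : L) : bool := #|Ml M l| < lcap I l.
Definition l_full  (M : {set S * P}) (l : L) : bool := #|Ml M l| == lcap I l.

(* s is unassigned in M or prefers p to M(s) *)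
Definition wants (M : {set S * P}) (s : S) (p : P) : Prop :=
  forall q, (s, q) \in M -> srank I s p < srank I s q.

Definition prefers_to_worst (l : L) (s : S) (X : {set S}) : Prop :=
  exists2 s', s' \in X & lrank I l s < lrank I l s'.

Definition blocks (M : {set S * P}) (s : S) (p : P) : Prop :=
  let l := offer I p in
  [/\ acceptable s p, (s, p) \notin M, wants M s p &
      [\/ p_under M p /\ l_under M l,
          [/\ p_under M p, l_full M l & s \in Ml M l],
          [/\ p_under M p, l_full M l & prefers_to_worst l s (Ml M l)]
        | p_full M p /\ prefers_to_worst l s (Mp M p)]].

Definition stable (M : {set S * P}) : Prop :=
  is_matching M /\ forall s p, ~ blocks M s p.

(* M^wedge: each student gets the better of her projects in M and M'
   (a project she has in only one of them; none if unassigned in both). *)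
Definition Mwedge (M M' : {set S * P}) : {set S * P} :=
  [set sp | (sp \in M) && [forall q, ((sp.1, q) \in M') ==> (srank I sp.1 sp.2 <= srank I sp.1 q)]
         || (sp \in M') && [forall q, ((sp.1, q) \in M) ==> (srank I sp.1 sp.2 <= srank I sp.1 q)]].

End Defs.

From mathcomp Require Import all_boot zify.
Set Implicit Arguments. Unset Strict Implicit. Unset Printing Implicit Defensive.

(* Let G be the set of students who strictly prefer their project in M' to their project
   in M.  M^wedge gives the students of G their M'-project and everyone else their M-project,
   so |M^wedge(l)| + |M(l) :&: G| = |M(l)| + |M'(l) :&: G|.  Take a project q of l to which
   M' assigns some s in G.  If q is full in M, stability of M makes l rank every student of
   M(q) above s, and stability of M' then forces every student that leaves q between M and
   M' into G; as |M'(q)| <= |M(q)|, q holds no more students of G in M' than in M.  If q is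
   undersubscribed in M, then l is full in M and every project of l to which M assigns a
   student preferring M to M' is full in M'; the previous case, with M and M' swapped,
   gives |M^wedge(l)| <= |M'(l)| <= |M(l)|.  Hence |M^wedge(l)| <= |M(l)| for every l, and
   since every student assigned in M is assigned in M^wedge, summing over the lecturers
   forces equality. *)

Lemma card_bigcup_disjoint (T J : finType) (D : pred J) (F : J -> {set T}) :
  (forall i j x, D i -> D j -> x \in F i -> x \in F j -> i = j) ->
  #|\bigcup_(i | D i) F i| = \sum_(i | D i) #|F i|.
Proof.
move=> disjF; rewrite -sum1_card big_mkcond /=.
under [RHS]eq_bigr => i _ do rewrite -sum1_card big_mkcond /=.
rewrite exchange_big /=; apply: eq_bigr => x _.
case: (boolP (x \in \bigcup_(i | D i) F i)) => [/bigcupP[i Di xFi] | xnF].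
- rewrite (bigD1 i) //= xFi big1 // => j /andP[Dj ji].
  by case: ifP => // xFj; rewrite (disjF _ _ _ Dj Di xFj xFi) eqxx in ji.
- rewrite big1 // => i Di; case: ifP => // xFi.
  by case/negP: xnF; apply/bigcupP; exists i.
Qed.

Lemma leq_card_setI_exchange (T : finType) (A B G : {set T}) :
  #|B| <= #|A| -> A :\: B \subset G -> [disjoint A :&: B & G] ->
  #|B :&: G| <= #|A :&: G|.
Proof.
move=> leBA sADG disABG.
have leBG : #|B :&: G| <= #|B :\: A|.
  apply/subset_leq_card/subsetP => x; rewrite !inE => /andP[xB xG]; rewrite xB andbT.
  by apply: contraFN (disjointFl disABG xG) => xA; rewrite inE xA.
have leAG : #|A :\: B| <= #|A :&: G|.
  by apply/subset_leq_card; rewrite subsetI subsetDl sADG.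
move: leBG leAG; rewrite !cardsD (setIC B A); lia.
Qed.

Section SPAS.
Variables (S P L : finType) (I : SPAS S P L).
Implicit Types (M : {set S * P}) (s t : S) (p q : P) (l : L).

Definition functional M := forall s p q, (s, p) \in M -> (s, q) \in M -> p = q.

Lemma matching_functional M : is_matching I M -> functional M.
Proof. by case. Qed.

Lemma matching_acceptable M s p : is_matching I M -> (s, p) \in M -> acceptable I s p.
Proof. by case=> accM _ _ _; apply: accM. Qed.

Lemma p_fullE M p : is_matching I M -> p_full I M p = ~~ p_under I M p.
Proof. by case=> _ _ capM _; rewrite /p_full /p_under eqn_leq capM -leqNgt. Qed.

Lemma l_fullE M l : is_matching I M -> l_full I M l = ~~ l_under I M l.
Proof. by case=> _ _ _ capM; rewrite /l_full /l_under eqn_leq capM -leqNgt. Qed.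

Lemma acceptable_on_list s p : acceptable I s p -> on_list I (offer I p) s.
Proof. by case/andP. Qed.

Lemma srank_antisym s p q : acceptable I s p -> acceptable I s q ->
  srank I s p <= srank I s q -> srank I s q <= srank I s p -> p = q.
Proof.
move=> /andP[accp _] /andP[accq _] le_pq le_qp.
by apply: (srank_inj accp accq); apply/eqP; rewrite eqn_leq le_pq le_qp.
Qed.

Lemma lrank_antisym l s t : on_list I l s -> on_list I l t ->
  lrank I l s <= lrank I l t -> lrank I l t <= lrank I l s -> s = t.
Proof.
move=> ls lt le_st le_ts.
by apply: (lrank_inj ls lt); apply/eqP; rewrite eqn_leq le_st le_ts.
Qed.

Lemma wants_notin M s p : wants I M s p -> (s, p) \notin M.
Proof. by move=> wsp; apply/negP => /wsp; rewrite ltnn. Qed.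

Lemma Ml_offer M s p : (s, p) \in M -> s \in Ml I M (offer I p).
Proof. by move=> sp; rewrite inE; apply/existsP; exists p; rewrite sp eqxx. Qed.

Lemma mem_Mp M s p : (s \in Mp M p) = ((s, p) \in M).
Proof. by rewrite inE. Qed.

Lemma stable_wanted_Mp M s q : stable I M -> acceptable I s q -> wants I M s q ->
  {in Mp M q, forall t, lrank I (offer I q) t <= lrank I (offer I q) s}.
Proof.
move=> [matM noblock] sq wsq t tq; rewrite leqNgt; apply/negP => st.
have block := fun b => noblock s q (And4 sq (wants_notin wsq) wsq b).
case: (boolP (p_under I M q)) => [qu | ]; last first.
  by rewrite -p_fullE // => qf; apply: block; apply: Or44; split=> //; exists t.
case: (boolP (l_under I M (offer I q))) => [lu | ]; first by apply: block; apply: Or41.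
rewrite -l_fullE // => lf; apply: block; apply: Or43; split=> //; exists t => //.
by rewrite mem_Mp in tq; apply: Ml_offer.
Qed.

Lemma stable_wanted_under M s q : stable I M -> acceptable I s q -> wants I M s q ->
  p_under I M q ->
  [/\ l_full I M (offer I q), s \notin Ml I M (offer I q)
    & {in Ml I M (offer I q), forall t, lrank I (offer I q) t <= lrank I (offer I q) s}].
Proof.
move=> [matM noblock] sq wsq qu.
have block := fun b => noblock s q (And4 sq (wants_notin wsq) wsq b).
have lf : l_full I M (offer I q).
  by rewrite l_fullE //; apply/negP => lu; apply: block; apply: Or41.
split=> //; first by apply/negP => sl; apply: block; apply: Or42.
move=> t tl; rewrite leqNgt; apply/negP => st.
by apply: block; apply: Or43; split=> //; exists t.
Qed.

(* Students unassigned in M but assigned in M' are gainers too. *)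
Definition gainers M M' : {set S} :=
  [set s | [exists q, ((s, q) \in M') &&
             [forall p, ((s, p) \in M) ==> (srank I s q < srank I s p)]]].

Lemma gainers_wants M M' s q : functional M' ->
  s \in gainers M M' -> (s, q) \in M' -> wants I M s q.
Proof.
move=> funM'; rewrite inE => /existsP[q' /andP[sq' /forallP wsq']] sq p sp.
by rewrite (funM' _ _ _ sq sq'); move/implyP: (wsq' p); apply.
Qed.

Lemma notin_gainers M M' s p q : functional M -> s \notin gainers M M' ->
  (s, p) \in M -> (s, q) \in M' -> srank I s p <= srank I s q.
Proof.
move=> funM sG sp sq; rewrite leqNgt; apply: contra sG => lt_qp.
rewrite inE; apply/existsP; exists q; rewrite sq /=.
by apply/forall_inP => p' sp'; rewrite -(funM _ _ _ sp sp').
Qed.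

Lemma mem_Mwedge M M' s p : is_matching I M -> is_matching I M' ->
  ((s, p) \in Mwedge I M M') =
  ((s, p) \in M) && (s \notin gainers M M') || ((s, p) \in M') && (s \in gainers M M').
Proof.
move=> matM matM'; have funM := matching_functional matM.
have funM' := matching_functional matM'.
rewrite inE /=; apply/idP/idP => [/orP[/andP[sp best] | /andP[sp best]] |
                                  /orP[/andP[sp sG] | /andP[sp sG]]].
- rewrite sp /=; apply/orP; left; apply/negP => sG.
  move: (sG); rewrite inE => /existsP[q /andP[sq _]].
  have := gainers_wants funM' sG sq sp.
  by rewrite ltnNge (forall_inP best q sq).
- rewrite sp /=; case: (boolP (s \in gainers M M')) => sG; rewrite ?orbT // orbF andbT.
  move: sG; rewrite inE negb_exists => /forallP /(_ p); rewrite sp /= negb_forall.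
  case/existsP=> q; rewrite negb_imply -leqNgt => /andP[sq le_qp].
  have le_pq := forall_inP best q sq.
  by rewrite (srank_antisym (matching_acceptable matM' sp) (matching_acceptable matM sq) le_pq le_qp).
- by rewrite sp /=; apply/orP; left; apply/forall_inP => q sq; apply: notin_gainers sG sp sq.
- rewrite sp /=; apply/orP; right; apply/forall_inP => q sq.
  exact/ltnW/(gainers_wants funM' sG sp).
Qed.

Lemma Mwedge_sym M M' : Mwedge I M M' = Mwedge I M' M.
Proof. by apply/setP => sp; rewrite !inE orbC. Qed.

Lemma functional_Mwedge M M' : is_matching I M -> is_matching I M' ->
  functional (Mwedge I M M').
Proof.
move=> matM matM' s p q; rewrite !mem_Mwedge //.
case: (s \in gainers M M'); rewrite ?andbT ?andbF ?orbF //=.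
  exact: matching_functional matM' s p q.
exact: matching_functional matM s p q.
Qed.

Lemma Mwedge_assigned M M' s p : is_matching I M -> is_matching I M' ->
  (s, p) \in M -> exists q, (s, q) \in Mwedge I M M'.
Proof.
move=> matM matM' sp; case: (boolP (s \in gainers M M')) => sG.
  move: (sG); rewrite inE => /existsP[q /andP[sq _]].
  by exists q; rewrite mem_Mwedge // sq sG orbT.
by exists p; rewrite mem_Mwedge // sp sG.
Qed.

Lemma Ml_Mwedge M M' l : is_matching I M -> is_matching I M' ->
  Ml I (Mwedge I M M') l = (Ml I M l :\: gainers M M') :|: (Ml I M' l :&: gainers M M').
Proof.
move=> matM matM'; apply/setP => s; rewrite in_setU in_setD in_setI.
case sG : (s \in gainers M M'); rewrite /= ?andbT ?andbF ?orbF !inE;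
  by under eq_existsb => p do rewrite mem_Mwedge // sG /= ?andbT ?andbF ?orbF.
Qed.

Lemma card_Ml_Mwedge_gainers M M' l : is_matching I M -> is_matching I M' ->
  #|Ml I (Mwedge I M M') l| + #|Ml I M l :&: gainers M M'| =
  #|Ml I M l| + #|Ml I M' l :&: gainers M M'|.
Proof.
move=> matM matM'; rewrite Ml_Mwedge // cardsU -(cardsID (gainers M M') (Ml I M l)).
suff -> : (Ml I M l :\: gainers M M') :&: (Ml I M' l :&: gainers M M') = set0.
  by rewrite cards0 subn0; lia.
by apply/setP => s; rewrite !in_setI in_setD in_set0; case: (s \in gainers M M'); rewrite ?andbF.
Qed.

Lemma card_Ml_setI M (F : {set S}) l : functional M ->
  #|Ml I M l :&: F| = \sum_(q | offer I q == l) #|Mp M q :&: F|.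
Proof.
move=> funM; rewrite -card_bigcup_disjoint => [|q q' s _ _]; last first.
  by rewrite !in_setI !mem_Mp => /andP[sq _] /andP[sq' _]; apply: funM sq sq'.
apply: eq_card => s; rewrite in_setI inE.
apply/idP/bigcupP => [/andP[/existsP[q /andP[sq ql]] sF] | [q ql]].
  by exists q; rewrite // in_setI mem_Mp sq.
by rewrite in_setI mem_Mp => /andP[sq ->]; rewrite andbT; apply/existsP; exists q; rewrite sq.
Qed.

Lemma displaced_gainers M M' s t q : stable I M -> stable I M' ->
  s \in gainers M M' -> (s, q) \in M' -> (t, q) \in M -> (t, q) \notin M' ->
  t \in gainers M M'.
Proof.
move=> stM stM' sG sq tq tq'; apply: contraT => tG.
have [matM matM'] := (stM.1, stM'.1).
have sq_acc := matching_acceptable matM' sq; have tq_acc := matching_acceptable matM tq.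
have le_ts : lrank I (offer I q) t <= lrank I (offer I q) s.
  apply: stable_wanted_Mp stM sq_acc _ _ _; last by rewrite mem_Mp.
  exact: gainers_wants (matching_functional matM') sG sq.
have wtq : wants I M' t q.
  move=> q' tq''; have le_qq' := notin_gainers (matching_functional matM) tG tq tq''.
  rewrite ltn_neqAle le_qq' andbT; apply: contra tq' => /eqP eq_qq'.
  by rewrite (srank_antisym tq_acc (matching_acceptable matM' tq'') le_qq') ?eq_qq'.
have le_st : lrank I (offer I q) s <= lrank I (offer I q) t.
  by apply: stable_wanted_Mp stM' tq_acc wtq _ _; rewrite mem_Mp.
have eq_st := lrank_antisym (acceptable_on_list sq_acc) (acceptable_on_list tq_acc) le_st le_ts.
by rewrite -eq_st sq in tq'.
Qed.

Lemma card_Mp_gainers M M' s q : stable I M -> stable I M' ->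
  s \in gainers M M' -> (s, q) \in M' -> p_full I M q ->
  #|Mp M' q :&: gainers M M'| <= #|Mp M q :&: gainers M M'|.
Proof.
move=> stM stM' sG sq /eqP qfull; apply: leq_card_setI_exchange.
- by rewrite qfull; case: stM'.1.
- apply/subsetP => t; rewrite in_setD !mem_Mp => /andP[tq' tq].
  exact: displaced_gainers stM stM' sG sq tq tq'.
- rewrite disjoints_subset; apply/subsetP => t.
  rewrite in_setI !mem_Mp in_setC => /andP[tq tq']; apply/negP => tG.
  have := gainers_wants (matching_functional stM'.1) tG tq'.
  by move/wants_notin; rewrite tq.
Qed.

Lemma card_Ml_Mwedge_le_of_full M M' l : stable I M -> stable I M' ->
  (forall s q, offer I q = l -> s \in gainers M M' -> (s, q) \in M' -> p_full I M q) ->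
  #|Ml I (Mwedge I M M') l| <= #|Ml I M l|.
Proof.
move=> stM stM' full; have := card_Ml_Mwedge_gainers l stM.1 stM'.1.
suff : #|Ml I M' l :&: gainers M M'| <= #|Ml I M l :&: gainers M M'| by lia.
have funM := matching_functional stM.1; have funM' := matching_functional stM'.1.
rewrite !card_Ml_setI //.
apply: leq_sum => q /eqP ql.
have [-> | [s]] := set_0Vmem (Mp M' q :&: gainers M M'); first by rewrite cards0.
rewrite in_setI mem_Mp => /andP[sq sG].
exact: card_Mp_gainers stM stM' sG sq (full s q ql sG sq).
Qed.

Lemma gainer_at_under_project M M' s q : stable I M -> stable I M' ->
  s \in gainers M M' -> (s, q) \in M' -> p_under I M q ->
  l_full I M (offer I q) /\
  (forall t q', offer I q' = offer I q -> t \in gainers M' M -> (t, q') \in M -> p_full I M' q').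
Proof.
move=> stM stM' sG sq qu; have [matM matM'] := (stM.1, stM'.1).
have sq_acc := matching_acceptable matM' sq.
have [lf sMl ranks] := stable_wanted_under stM sq_acc (gainers_wants (matching_functional matM') sG sq) qu.
split=> // t q' ql tG tq'; rewrite p_fullE //; apply/negP => q'u.
have tq'_acc := matching_acceptable matM tq'.
have [_ _ ranks'] := stable_wanted_under stM' tq'_acc (gainers_wants (matching_functional matM) tG tq') q'u.
rewrite ql in ranks'.
have le_st := ranks' s (Ml_offer sq).
have le_ts : lrank I (offer I q) t <= lrank I (offer I q) s by rewrite ranks // -ql Ml_offer.
have tl : on_list I (offer I q) t by rewrite -ql; apply: acceptable_on_list.
have eq_st := lrank_antisym (acceptable_on_list sq_acc) tl le_st le_ts.
by case/negP: sMl; rewrite eq_st -ql Ml_offer.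
Qed.

Lemma card_Ml_Mwedge_le M M' l : stable I M -> stable I M' ->
  #|Ml I (Mwedge I M M') l| <= #|Ml I M l|.
Proof.
move=> stM stM'.
case: (boolP [exists q, exists s,
  [&& offer I q == l, s \in gainers M M', (s, q) \in M' & p_under I M q]]).
- case/existsP=> q /existsP[s /and4P[/eqP ql sG sq qu]].
  have [lf full'] := gainer_at_under_project stM stM' sG sq qu; rewrite ql in lf full'.
  rewrite Mwedge_sym; apply: leq_trans (card_Ml_Mwedge_le_of_full stM' stM full') _.
  by rewrite (eqP lf); case: stM'.1.
- rewrite negb_exists => /forallP none.
  apply: card_Ml_Mwedge_le_of_full => // s q ql sG sq; rewrite (p_fullE _ stM.1).
  by apply/negP => qu; case/negP: (none q); apply/existsP; exists s; rewrite ql eqxx sG sq qu.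
Qed.

Lemma sum_card_Ml M : functional M -> \sum_l #|Ml I M l| = #|\bigcup_l Ml I M l|.
Proof.
move=> funM; rewrite card_bigcup_disjoint // => l l' s _ _.
rewrite !inE => /existsP[p /andP[sp /eqP <-]] /existsP[p' /andP[sp' /eqP <-]].
by rewrite (funM _ _ _ sp sp').
Qed.

Lemma sum_card_Ml_Mwedge M M' : is_matching I M -> is_matching I M' ->
  \sum_l #|Ml I M l| <= \sum_l #|Ml I (Mwedge I M M') l|.
Proof.
move=> matM matM'.
rewrite (sum_card_Ml (matching_functional matM)).
rewrite (sum_card_Ml (functional_Mwedge matM matM')).
apply/subset_leq_card/subsetP => s /bigcupP[l _]; rewrite inE => /existsP[p /andP[sp _]].
have [q sq] := Mwedge_assigned matM matM' sp.
by apply/bigcupP; exists (offer I q); rewrite ?Ml_offer.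
Qed.

Lemma card_Ml_Mwedge M M' l : stable I M -> stable I M' ->
  #|Ml I (Mwedge I M M') l| = #|Ml I M l|.
Proof.
move=> stM stM'.
have [le_sum] := leqif_sum (fun l' (_ : true) => leqif_eq (card_Ml_Mwedge_le l' stM stM')).
rewrite eqn_leq le_sum (sum_card_Ml_Mwedge stM.1 stM'.1).
by move=> /esym/forall_inP/(_ l isT)/eqP.
Qed.

End SPAS.

Theorem lemma5 (S P L : finType) (I : SPAS S P L) (M M' : {set S * P}) (l : L) :
  stable I M -> stable I M' ->
  l_under I (Mwedge I M M') l ->
  l_under I M l /\ l_under I M' l.
Proof.
move=> stM stM'; rewrite /l_under (card_Ml_Mwedge l stM stM') => underM.
by rewrite -(card_Ml_Mwedge l stM' stM) -Mwedge_sym (card_Ml_Mwedge l stM stM').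
Qed.
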